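(* Let $d\ge 2$, $2\le k\le d+1$, and let $y_1,\dots,y_N\in\{1,\dots,k\}$ be labels of a class-balanced dataset (each class has exactly $N/k\ge1$ samples). For $\boldsymbol w_1,\dots,\boldsymbol w_k,\boldsymbol z_1,\dots,\boldsymbol z_N\in\mathbb S^{d-1}$ define the sample margin regularization risk $$R=\frac1N\sum_{i=1}^N\Big(-\boldsymbol w_{y_i}^{\mathrm T}\boldsymbol z_i+\max_{j\ne y_i}\boldsymbol w_j^{\mathrm T}\boldsymbol z_i\Big).$$ Then $R\ge-\frac{k}{k-1}$, with equality if and only if $\boldsymbol w_i^{\mathrm T}\boldsymbol w_j=-\frac1{k-1}$ for all $i\ne j$ and $\boldsymbol z_i=\boldsymbol w_{y_i}$ for all $i$. Consequently minimizing $R$ yields the largest possible class margin $\arccos\frac{-1}{k-1}$ and the largest possible minimal sample margin $\frac{k}{k-1}$.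
   Context: $\mathbb S^{d-1}$ is the unit sphere in $\mathbb R^d$. Class margin: $m_c(\{\boldsymbol w_i\})=\arccos\big[\max_{i\ne j}\boldsymbol w_i^{\mathrm T}\boldsymbol w_j\big]$ for unit prototypes. Minimal sample margin: $\gamma_{\min}=\min_i\big(\boldsymbol w_{y_i}^{\mathrm T}\boldsymbol z_i-\max_{j\ne y_i}\boldsymbol w_j^{\mathrm T}\boldsymbol z_i\big)$. *)

From mathcomp Require Import all_boot all_order all_algebra.
From mathcomp Require Import all_classical all_reals all_analysis.
Set Implicit Arguments. Unset Strict Implicit. Unset Printing Implicit Defensive.
Import Order.TTheory GRing.Theory Num.Theory.
Local Open Scope ring_scope.

Section Defs.
Variable R : realType.

Definition dotp (d : nat) (u v : 'rV[R]_d) : R := \sum_(i < d) u 0 i * v 0 i.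

Definition on_sphere (d : nat) (u : 'rV[R]_d) : Prop := dotp u u = 1.

(* maximum / minimum of a (nonempty) finite list of reals;
   the seed is the head of the list, so for a nonempty list this is
   exactly the maximum (resp. minimum) of its elements *)
Definition maxseq (s : seq R) : R := \big[Num.max/head 0 s]_(x <- s) x.
Definition minseq (s : seq R) : R := \big[Num.min/head 0 s]_(x <- s) x.

Definition max_except (k : nat) (c : 'I_k) (f : 'I_k -> R) : R :=
  maxseq [seq f j | j <- enum 'I_k & j != c].

Definition sm_risk (d k N : nat) (y : 'I_N -> 'I_k)
  (w : 'I_k -> 'rV[R]_d) (z : 'I_N -> 'rV[R]_d) : R :=
  N%:R^-1 * \sum_(i < N)
    (- dotp (w (y i)) (z i) + max_except (y i) (fun j => dotp (w j) (z i))).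

Definition class_margin (d k : nat) (w : 'I_k -> 'rV[R]_d) : R :=
  acos (maxseq [seq dotp (w p.1) (w p.2) | p <- enum [pred q : 'I_k * 'I_k | q.1 != q.2]]).

Definition min_sample_margin (d k N : nat) (y : 'I_N -> 'I_k)
  (w : 'I_k -> 'rV[R]_d) (z : 'I_N -> 'rV[R]_d) : R :=
  minseq [seq dotp (w (y i)) (z i) - max_except (y i) (fun j => dotp (w j) (z i))
         | i <- enum 'I_N].

Definition class_balanced (k N : nat) (y : 'I_N -> 'I_k) : Prop :=
  exists m : nat, (0 < m)%N /\ forall c : 'I_k, #|[set i | y i == c]| = m.

End Defs.

From mathcomp Require Import all_boot all_order all_algebra.
From mathcomp Require Import all_classical all_reals all_analysis.
From mathcomp Require Import ring lra.
Set Implicit Arguments. Unset Strict Implicit. Unset Printing Implicit Defensive.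
Import Order.TTheory GRing.Theory Num.Theory.
Local Open Scope ring_scope.

(* Write W for the sum of the prototypes. For a sample of class c with feature z, the
   largest score of the other classes is at least their mean (W.z - w_c.z)/(k-1), and
   completing the square in |W + k (z - w_c)|^2 bounds the resulting linear term in z.
   Summed over a class-balanced dataset, the risk is therefore -k/(k-1) plus a sum of
   nonnegative slacks (max minus mean, the completed squares, and a multiple of |W|^2).
   This gives the bound, and equality forces W = 0, z_i = w_(y_i) and
   w_j.w_(y_i) = -1/(k-1): the prototypes form a regular simplex, which exists in R^d
   as soon as k <= d+1. Since |W|^2 >= 0, the largest pairwise cosine is at least
   -1/(k-1), and the minimal sample margin is at most the mean margin, -R. *)

Section DotProduct.
Variables (R : realType) (d : nat).
Implicit Types u v x : 'rV[R]_d.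

Lemma dotpC u v : dotp u v = dotp v u.
Proof. by apply: eq_bigr => i _; rewrite mulrC. Qed.

Lemma dotpDl u v x : dotp (u + v) x = dotp u x + dotp v x.
Proof. by rewrite /dotp -big_split; apply: eq_bigr => i _; rewrite mxE mulrDl. Qed.

Lemma dotpNl u x : dotp (- u) x = - dotp u x.
Proof. by rewrite /dotp -sumrN; apply: eq_bigr => i _; rewrite mxE mulNr. Qed.

Lemma dotpZl a u x : dotp (a *: u) x = a * dotp u x.
Proof. by rewrite /dotp mulr_sumr; apply: eq_bigr => i _; rewrite mxE mulrA. Qed.

Lemma dotpDr u v x : dotp x (u + v) = dotp x u + dotp x v.
Proof. by rewrite dotpC dotpDl !(dotpC x). Qed.

Lemma dotpNr u x : dotp x (- u) = - dotp x u.
Proof. by rewrite dotpC dotpNl dotpC. Qed.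

Lemma dotpZr a u x : dotp x (a *: u) = a * dotp x u.
Proof. by rewrite dotpC dotpZl dotpC. Qed.

Lemma dotp_suml (I : finType) (F : I -> 'rV[R]_d) x :
  dotp (\sum_i F i) x = \sum_i dotp (F i) x.
Proof.
rewrite /dotp exchange_big; apply: eq_bigr => j _.
by rewrite summxE mulr_suml.
Qed.

Lemma dotp0l x : dotp 0 x = 0.
Proof. by rewrite /dotp big1 // => i _; rewrite mxE mul0r. Qed.

Lemma dotp_ge0 u : 0 <= dotp u u.
Proof. by apply: sumr_ge0 => i _; rewrite -expr2 sqr_ge0. Qed.

Lemma dotp_eq0 u : (dotp u u == 0) = (u == 0).
Proof.
apply/idP/eqP => [/eqP uu0|->]; last by rewrite dotp0l.
have sq_ge0 j : 0 <= u 0 j * u 0 j by rewrite -expr2 sqr_ge0.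
apply/rowP => i; rewrite mxE; apply/eqP.
by have /eqP := psumr_eq0P (fun j _ => sq_ge0 j) uu0 (i := i) isT; rewrite mulf_eq0 orbb.
Qed.

Lemma dotp_le1 u v : on_sphere u -> on_sphere v -> dotp u v <= 1.
Proof.
move=> uu vv; have := dotp_ge0 (u - v).
by rewrite !(dotpDl, dotpDr, dotpNl, dotpNr) uu vv (dotpC v u); lra.
Qed.

End DotProduct.

Section SeqExtrema.
Variable R : realType.
Implicit Types (s : seq R) (a x : R).

Lemma maxseq_ge s x : x \in s -> x <= maxseq s.
Proof. by move=> xs; apply: (le_bigmax_seq _ _ predT id xs). Qed.

Lemma minseq_le s x : x \in s -> minseq s <= x.
Proof. by move=> xs; apply: (ge_bigmin_seq _ _ predT id xs). Qed.

Lemma maxseq_le s a : s != [::] -> {in s, forall x, x <= a} -> maxseq s <= a.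
Proof.
case: s => // x s _ le_a; rewrite /maxseq big_seq.
by apply: bigmax_le => [|y]; [apply: le_a; rewrite mem_head | exact: le_a].
Qed.

Lemma maxseq_eq s a : a \in s -> {in s, forall x, x <= a} -> maxseq s = a.
Proof.
move=> sa le_a; apply: le_anti; rewrite maxseq_ge // maxseq_le //.
by apply: contraTneq sa => ->.
Qed.

Lemma minseq_eq s a : a \in s -> {in s, forall x, a <= x} -> minseq s = a.
Proof.
case: s => // x s sa ge_a; apply: le_anti; rewrite minseq_le //= /minseq big_seq.
by apply: le_bigmin => [|y]; [apply: ge_a; rewrite mem_head | exact: ge_a].
Qed.

End SeqExtrema.

Lemma exists_neq k (c : 'I_k) : (1 < k)%N -> exists j : 'I_k, j != c.
Proof.
move=> k_gt1; have /card_gt0P[j] : (0 < #|predC1 c|)%N by rewrite cardC1 card_ord -subn1 subn_gt0.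
by rewrite inE; exists j.
Qed.

Section MaxExcept.
Variables (R : realType) (k : nat) (c : 'I_k).
Implicit Types (f : 'I_k -> R) (a : R).

Lemma max_except_ge f j : j != c -> f j <= max_except c f.
Proof. by move=> jc; apply/maxseq_ge/map_f; rewrite mem_filter jc mem_enum. Qed.

Lemma max_except_const f a : (1 < k)%N ->
  (forall j, j != c -> f j = a) -> max_except c f = a.
Proof.
move=> k_gt1 fE; have [j jc] := exists_neq c k_gt1.
apply: maxseq_eq => [|x /mapP[i]]; first by rewrite -(fE j jc) map_f // mem_filter jc mem_enum.
by rewrite mem_filter mem_enum andbT => ic ->; rewrite fE.
Qed.

Lemma sum_except_const a : \sum_(j | j != c) a = (k%:R - 1) * a.
Proof.
rewrite sumr_const cardC1 card_ord -[a *+ _]mulr_natl -subn1 natrB //.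
exact: leq_ltn_trans (leq0n c) (ltn_ord c).
Qed.

Lemma sum_except_le_max f : \sum_(j | j != c) f j <= (k%:R - 1) * max_except c f.
Proof. by rewrite -sum_except_const; apply: ler_sum => j; apply: max_except_ge. Qed.

Lemma sum_except_eq_max f :
  \sum_(j | j != c) f j = (k%:R - 1) * max_except c f ->
  forall j, j != c -> f j = max_except c f.
Proof.
move=> sumE j jc.
have gap_ge0 i : i != c -> 0 <= max_except c f - f i by rewrite subr_ge0; apply: max_except_ge.
have gaps_eq0 : \sum_(i | i != c) (max_except c f - f i) = 0.
  by rewrite sumrB sumE sum_except_const subrr.
by have /eqP := psumr_eq0P gap_ge0 gaps_eq0 jc; rewrite subr_eq0 => /eqP.
Qed.

End MaxExcept.

Lemma ler_acos (R : realType) : {in `[-1, 1] &, {homo @acos R : x y /~ x <= y}}.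
Proof.
move=> a b a_itv b_itv ab.
have acos_itv (x : R) : x \in `[-1, 1] -> acos x \in `[0, pi].
  by rewrite !in_itv /= => x_itv; rewrite acos_ge0 ?acos_lepi.
by rewrite leNgt -ltr_cos ?acos_itv // !acosK // -leNgt.
Qed.

Section BalancedLabels.
Variables (k N m : nat) (y : 'I_N -> 'I_k).
Hypothesis class_size : forall c, #|[set i | y i == c]| = m.

Lemma sum_balanced (V : nmodType) (F : 'I_k -> V) :
  \sum_(i < N) F (y i) = (\sum_c F c) *+ m.
Proof.
rewrite (partition_big y predT) //= -sumrMnl; apply: eq_bigr => c _.
rewrite (eq_bigr (fun=> F c)) => [|i /eqP -> //].
by rewrite sumr_const -(class_size c) cardsE.
Qed.

Lemma class_nonempty : (0 < m)%N -> forall c, exists i, y i = c.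
Proof.
move=> m_gt0 c; have /card_gt0P[i] : (0 < #|[set i | y i == c]|)%N by rewrite class_size.
by rewrite inE => /eqP; exists i.
Qed.

End BalancedLabels.

Definition regular_simplex (R : realType) d k (w : 'I_k -> 'rV[R]_d) : Prop :=
  forall i j, i != j -> dotp (w i) (w j) = - (1 / (k%:R - 1)).

Section SphericalPrototypes.
Variables (R : realType) (d k : nat) (w : 'I_k -> 'rV[R]_d).
Hypotheses (k_gt1 : (1 < k)%N) (w_unit : forall c, on_sphere (w c)).

Let k_gt0 : 0 < k%:R :> R.
Proof. by rewrite ltr0n ltnW. Qed.

Let k1_gt0 : 0 < k%:R - 1 :> R.
Proof. by rewrite subr_gt0 ltr1n. Qed.

Let denom_gt0 : 0 < 2 * k%:R * (k%:R - 1) :> R.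
Proof. by rewrite !mulr_gt0. Qed.

Definition wsum := \sum_c w c.

Lemma sum_except_dotp c x :
  \sum_(j | j != c) dotp (w j) x = dotp wsum x - dotp (w c) x.
Proof. by rewrite /wsum dotp_suml [in RHS](bigD1 c) //= addrC addrK. Qed.

Lemma sum_dotp_wsum : \sum_c dotp wsum (w c) = dotp wsum wsum.
Proof. by rewrite {3}/wsum dotp_suml; apply: eq_bigr => c _; rewrite dotpC. Qed.

Definition sample_loss c z := - dotp (w c) z + max_except c (fun j => dotp (w j) z).

Definition max_mean_gap c z :=
  max_except c (fun j => dotp (w j) z) - (\sum_(j | j != c) dotp (w j) z) / (k%:R - 1).

Definition align_gap c z :=
  dotp (wsum + k%:R *: (z - w c)) (wsum + k%:R *: (z - w c)) / (2 * k%:R * (k%:R - 1)).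

Definition loss_floor c :=
  (dotp (wsum - k%:R *: w c) (wsum - k%:R *: w c) + k%:R ^+ 2) / (2 * k%:R * (k%:R - 1)).

Lemma max_mean_gap_ge0 c z : 0 <= max_mean_gap c z.
Proof. by rewrite subr_ge0 ler_pdivrMr // mulrC sum_except_le_max. Qed.

Lemma align_gap_ge0 c z : 0 <= align_gap c z.
Proof. by rewrite divr_ge0 ?dotp_ge0 ?ltW. Qed.

(* For unit z, |W + k (z - w_c)|^2 = |W - k w_c|^2 + 2k (W - k w_c).z + k^2. *)
Lemma sample_loss_decomp c z : on_sphere z ->
  sample_loss c z = max_mean_gap c z + align_gap c z - loss_floor c.
Proof.
move=> zz; rewrite /sample_loss /max_mean_gap /align_gap /loss_floor sum_except_dotp.
rewrite !(dotpDl, dotpDr, dotpNl, dotpNr, dotpZl, dotpZr) zz w_unit.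
rewrite (dotpC z) (dotpC (w c) wsum) (dotpC z).
by field; rewrite !gt_eqF.
Qed.

Lemma sum_loss_floor :
  \sum_c loss_floor c = k%:R ^+ 2 / (k%:R - 1) - dotp wsum wsum / (2 * (k%:R - 1)).
Proof.
have floorE c : loss_floor c = (dotp wsum wsum + 2 * k%:R ^+ 2
    - 2 * k%:R * dotp wsum (w c)) / (2 * k%:R * (k%:R - 1)).
  rewrite /loss_floor !(dotpDl, dotpDr, dotpNl, dotpNr, dotpZl, dotpZr) w_unit (dotpC (w c)).
  by congr (_ / _); ring.
rewrite (eq_bigr _ (fun c _ => floorE c)) -mulr_suml sumrB -mulr_sumr sum_dotp_wsum.
by rewrite sumr_const card_ord -mulr_natl; field; rewrite !gt_eqF.
Qed.

Definition sample_slack c z := max_mean_gap c z + align_gap c z.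

Lemma sample_slack_ge0 c z : 0 <= sample_slack c z.
Proof. by rewrite addr_ge0 ?max_mean_gap_ge0 ?align_gap_ge0. Qed.

Lemma sample_slack_eq0 c z : wsum = 0 -> on_sphere z -> sample_slack c z = 0 ->
  z = w c /\ forall j, j != c -> dotp (w j) (w c) = - (1 / (k%:R - 1)).
Proof.
move=> wsum0 zz /eqP; rewrite paddr_eq0 ?max_mean_gap_ge0 ?align_gap_ge0 //.
case/andP; rewrite subr_eq0 => /eqP maxE.
rewrite mulf_eq0 invr_eq0 (gt_eqF denom_gt0) orbF dotp_eq0 wsum0 add0r.
rewrite scaler_eq0 (gt_eqF k_gt0) /= subr_eq0 => /eqP zE; subst z; split=> // j jc.
have sumE : \sum_(i | i != c) dotp (w i) (w c) =
    (k%:R - 1) * max_except c (fun i => dotp (w i) (w c)).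
  by rewrite maxE mulrC divfK ?gt_eqF.
by rewrite (sum_except_eq_max sumE jc) maxE sum_except_dotp wsum0 dotp0l w_unit sub0r mulNr.
Qed.

Lemma regular_simplex_sample_loss c :
  regular_simplex w -> sample_loss c (w c) = - (k%:R / (k%:R - 1)).
Proof.
move=> simplex; rewrite /sample_loss w_unit (max_except_const (a := - (1 / (k%:R - 1)))) //.
  by field; rewrite gt_eqF.
by move=> j jc; apply: simplex.
Qed.

Definition max_pair_dotp :=
  maxseq [seq dotp (w p.1) (w p.2) | p <- enum [pred q : 'I_k * 'I_k | q.1 != q.2]].

Let pair_dotp_mem i j : i != j ->
  dotp (w i) (w j) \in [seq dotp (w p.1) (w p.2) | p <- enum [pred q : 'I_k * 'I_k | q.1 != q.2]].
Proof. by move=> ij; apply/mapP; exists (i, j); rewrite // mem_enum. Qed.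

Let some_pair : exists i j : 'I_k, i != j.
Proof.
pose c : 'I_k := Ordinal (ltnW k_gt1).
by have [j jc] := exists_neq c k_gt1; exists j, c.
Qed.

Lemma max_pair_dotp_le1 : max_pair_dotp <= 1.
Proof.
have [i [j ij]] := some_pair; apply: maxseq_le => [|_ /mapP[p _ ->]].
  by apply: contraTneq (pair_dotp_mem ij) => ->.
exact: dotp_le1.
Qed.

Lemma max_pair_dotp_ge : - (1 / (k%:R - 1)) <= max_pair_dotp.
Proof.
have class_le c : dotp wsum (w c) - 1 <= (k%:R - 1) * max_pair_dotp.
  have := sum_except_dotp c (w c); rewrite w_unit => <-.
  rewrite -(sum_except_const c).
  by apply: ler_sum => j jc; apply/maxseq_ge/pair_dotp_mem.
have : \sum_c (dotp wsum (w c) - 1) <= \sum_(c < k) ((k%:R - 1) * max_pair_dotp).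
  by apply: ler_sum => c _; apply: class_le.
rewrite sumrB sum_dotp_wsum !sumr_const card_ord -[_ * _ *+ k]mulr_natl => sum_le.
have lower : -1 <= (k%:R - 1) * max_pair_dotp.
  by rewrite -(ler_pM2l k_gt0) mulrN1; have := dotp_ge0 wsum; lra.
by rewrite -mulNr ler_pdivrMr // mulrC.
Qed.

Lemma class_margin_le : class_margin w <= acos (- (1 / (k%:R - 1))).
Proof.
have k_ge2 : 2 <= k%:R :> R by rewrite ler_nat.
have inv_ge0 : 0 <= 1 / (k%:R - 1) :> R by rewrite divr_ge0 ?ltW.
have inv_le1 : 1 / (k%:R - 1) <= 1 :> R by rewrite ler_pdivrMr // mul1r; lra.
apply: ler_acos max_pair_dotp_ge; rewrite in_itv /= ?max_pair_dotp_le1 ?andbT.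
  by apply: le_trans max_pair_dotp_ge; lra.
by apply/andP; split; lra.
Qed.

Lemma class_margin_regular_simplex :
  regular_simplex w -> class_margin w = acos (- (1 / (k%:R - 1))).
Proof.
move=> simplex; congr acos; have [i [j ij]] := some_pair.
apply: maxseq_eq => [|x /mapP[p]]; first by rewrite -(simplex i j ij) pair_dotp_mem.
by rewrite mem_enum inE => /simplex dotpE ->; rewrite dotpE.
Qed.

End SphericalPrototypes.

Section BalancedRisk.
Variables (R : realType) (d k N m : nat).
Variables (y : 'I_N -> 'I_k) (w : 'I_k -> 'rV[R]_d) (z : 'I_N -> 'rV[R]_d).
Hypotheses (k_gt1 : (1 < k)%N) (w_unit : forall c, on_sphere (w c)).
Hypotheses (z_unit : forall i, on_sphere (z i)).
Hypotheses (m_gt0 : (0 < m)%N) (class_size : forall c, #|[set i | y i == c]| = m).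

Let k1_gt0 : 0 < k%:R - 1 :> R.
Proof. by rewrite subr_gt0 ltr1n. Qed.

Let k_gt0 : (0 < k)%N.
Proof. exact: ltnW. Qed.

Let N_gt0 : (0 < N)%N.
Proof.
have [i _] := class_nonempty class_size m_gt0 (Ordinal k_gt0).
exact: leq_ltn_trans (leq0n i) (ltn_ord i).
Qed.

Let N_eq : N%:R = k%:R * m%:R :> R.
Proof.
have := sum_balanced class_size (fun=> 1 : R).
by rewrite !sumr_const !card_ord mulr_natr.
Qed.

Let sm_riskE : sm_risk y w z = N%:R^-1 * \sum_i sample_loss w (y i) (z i).
Proof. by []. Qed.

Let spread_ge0 : 0 <= m%:R * dotp (wsum w) (wsum w) / (2 * (k%:R - 1)).
Proof. by rewrite divr_ge0 ?mulr_ge0 ?dotp_ge0 ?ler0n ?ltW. Qed.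

Definition total_slack :=
  \sum_i sample_slack w (y i) (z i) + m%:R * dotp (wsum w) (wsum w) / (2 * (k%:R - 1)).

Lemma sm_risk_excess : sm_risk y w z + k%:R / (k%:R - 1) = N%:R^-1 * total_slack.
Proof.
rewrite sm_riskE /total_slack; under eq_bigr do rewrite sample_loss_decomp //.
rewrite sumrB (sum_balanced class_size) sum_loss_floor // -[(_ - _) *+ m]mulr_natr N_eq.
by field; rewrite !gt_eqF ?ltr0n.
Qed.

Lemma sm_risk_ge : - (k%:R / (k%:R - 1)) <= sm_risk y w z.
Proof.
rewrite -subr_ge0 opprK sm_risk_excess mulr_ge0 ?invr_ge0 ?ler0n ?addr_ge0 //.
by rewrite sumr_ge0 // => i _; apply: sample_slack_ge0.
Qed.

Lemma total_slack_eq0 : total_slack = 0 ->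
  wsum w = 0 /\ forall i, sample_slack w (y i) (z i) = 0.
Proof.
have slack_ge0 i : 0 <= sample_slack w (y i) (z i) by apply: sample_slack_ge0.
move/eqP; rewrite paddr_eq0 ?sumr_ge0 // => /andP[/eqP sum0].
have two_k1_gt0 : 0 < 2 * (k%:R - 1) :> R by rewrite mulr_gt0.
rewrite mulf_eq0 invr_eq0 (gt_eqF two_k1_gt0) orbF.
rewrite mulf_eq0 pnatr_eq0 (gtn_eqF m_gt0) dotp_eq0 => /eqP wsum0.
by split=> // i; apply: (psumr_eq0P (fun i _ => slack_ge0 i) sum0).
Qed.

Lemma sm_risk_min : sm_risk y w z = - (k%:R / (k%:R - 1)) ->
  regular_simplex w /\ forall i, z i = w (y i).
Proof.
move=> risk_min; have /eqP := sm_risk_excess; rewrite risk_min addNr eq_sym.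
rewrite mulf_eq0 invr_eq0 pnatr_eq0 (gtn_eqF N_gt0) => /eqP/total_slack_eq0[wsum0 slack0].
have slack_eq0 i := sample_slack_eq0 k_gt1 w_unit wsum0 (z_unit i) (slack0 i).
split=> [i j ij|i]; last by case: (slack_eq0 i).
have [s ys] := class_nonempty class_size m_gt0 i.
have [_ dotpE] := slack_eq0 s.
by rewrite dotpC -ys dotpE // ys eq_sym.
Qed.

Lemma sm_risk_regular_simplex : regular_simplex w -> (forall i, z i = w (y i)) ->
  sm_risk y w z = - (k%:R / (k%:R - 1)).
Proof.
move=> simplex zE; rewrite sm_riskE (eq_bigr (fun=> - (k%:R / (k%:R - 1)))) => [|i _].
  by rewrite sumr_const card_ord -[- _ *+ N]mulr_natl mulKf // pnatr_eq0 -lt0n N_gt0.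
by rewrite zE regular_simplex_sample_loss.
Qed.

Lemma min_sample_margin_le : min_sample_margin y w z <= k%:R / (k%:R - 1).
Proof.
have N_pos : 0 < N%:R :> R by rewrite ltr0n N_gt0.
have margin_le i : min_sample_margin y w z <= - sample_loss w (y i) (z i).
  by rewrite opprD opprK; apply/minseq_le/map_f; rewrite mem_enum.
have : N%:R^-1 * \sum_(i < N) min_sample_margin y w z <= - sm_risk y w z.
  rewrite sm_riskE -mulrN -sumrN ler_pM2l ?invr_gt0 //.
  by apply: ler_sum => i _; apply: margin_le.
rewrite sumr_const card_ord -[min_sample_margin _ _ _ *+ N]mulr_natl mulKf ?gt_eqF //.
by move/le_trans; apply; rewrite lerNl; apply: sm_risk_ge.
Qed.

Lemma min_sample_margin_regular_simplex : regular_simplex w ->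
  (forall i, z i = w (y i)) -> min_sample_margin y w z = k%:R / (k%:R - 1).
Proof.
move=> simplex zE.
have margin i : dotp (w (y i)) (z i) - max_except (y i) (fun j => dotp (w j) (z i)) =
    k%:R / (k%:R - 1).
  by rewrite zE -[RHS]opprK -(regular_simplex_sample_loss k_gt1 w_unit (y i) simplex) opprD opprK.
apply: minseq_eq => [|x /mapP[i _ ->]]; last by rewrite margin.
by rewrite -(margin (Ordinal N_gt0)); apply/map_f; rewrite mem_enum.
Qed.

End BalancedRisk.

Section RegularSimplexConstruction.
Variables (R : realType) (d k : nat).
Hypotheses (k_gt1 : (1 < k)%N) (k_le_dS : (k <= d.+1)%N).

Local Notation n := k.-1.

Let n_le_d : (n <= d)%N.
Proof. by rewrite -ltnS prednK // ltnW. Qed.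

Let n_eq : n%:R = k%:R - 1 :> R.
Proof. by rewrite -subn1 natrB // ltnW. Qed.

Definition basis_row (c : nat) : 'rV[R]_d := \row_(i < d) (i == c :> nat)%:R.

Definition head_ones : 'rV[R]_d := \row_(i < d) (i < n)%:R.

Lemma dotp_basis_row c u (c_lt_d : (c < d)%N) :
  dotp (basis_row c) u = u 0 (Ordinal c_lt_d).
Proof.
rewrite /dotp (bigD1 (Ordinal c_lt_d)) //= big1 => [|i ic].
  by rewrite mxE eqxx mul1r addr0.
by rewrite mxE -[c]/(val (Ordinal c_lt_d)) val_eqE (negbTE ic) mul0r.
Qed.

Lemma dotp_head_ones : dotp head_ones head_ones = n%:R.
Proof.
rewrite /dotp (eq_bigr (fun i : 'I_d => if (i < n)%N then 1 else 0)) => [|i _]; last first.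
  by rewrite mxE; case: (i < n)%N; rewrite ?mulr1 ?mulr0.
by rewrite -big_mkcond /= -(big_ord_widen d (fun=> 1) n_le_d) sumr_const card_ord.
Qed.

Variable gamma : R.
Hypothesis gamma_sq : gamma ^+ 2 = k%:R^-1.

Let beta : R := (1 + gamma) / n%:R.

Let kE : k%:R = (gamma ^+ 2)^-1.
Proof. by rewrite gamma_sq invrK. Qed.

Let gamma_neq0 : gamma != 0.
Proof. by rewrite -sqrf_eq0 gamma_sq invr_eq0 pnatr_eq0 -lt0n ltnW. Qed.

Let gamma_sq_neq1 : 1 - gamma ^+ 2 != 0.
Proof.
by rewrite gamma_sq subr_eq0 eq_sym invr_eq1 pnatr_eq1 gtn_eqF.
Qed.

Definition simplex_vertex (c : 'I_k) : 'rV[R]_d :=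
  if (c < n)%N then basis_row c - beta *: head_ones else gamma *: head_ones.

Lemma dotp_simplex_vertex c c' :
  dotp (simplex_vertex c) (simplex_vertex c') = (c == c')%:R - k%:R^-1.
Proof.
have ord_le_n (i : 'I_k) : (i <= n)%N by rewrite -ltnS prednK // ltnW.
rewrite /simplex_vertex; case: (ltnP c n) => c_lt_n; case: (ltnP c' n) => c'_lt_n.
- have c_lt_d := leq_trans c_lt_n n_le_d; have c'_lt_d := leq_trans c'_lt_n n_le_d.
  rewrite !(dotpDl, dotpDr, dotpNl, dotpNr, dotpZl, dotpZr) (dotpC head_ones).
  rewrite !(dotp_basis_row _ c_lt_d, dotp_basis_row _ c'_lt_d) !mxE /= c_lt_n c'_lt_n.
  rewrite dotp_head_ones /beta !n_eq kE /= !mulr1; field.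
  by rewrite ?mulN1r ?gamma_neq0 ?gamma_sq_neq1.
- have c_lt_d := leq_trans c_lt_n n_le_d.
  have -> : (c == c') = false by apply: contraTF c_lt_n => /eqP ->; rewrite -leqNgt.
  rewrite !(dotpDl, dotpNl, dotpZl, dotpZr) dotp_basis_row mxE /= c_lt_n.
  rewrite dotp_head_ones /beta !n_eq kE /= mulr1; field.
  by rewrite ?mulN1r ?gamma_neq0 ?gamma_sq_neq1.
- have c'_lt_d := leq_trans c'_lt_n n_le_d.
  have -> : (c == c') = false by apply: contraTF c'_lt_n => /eqP <-; rewrite -leqNgt.
  rewrite !(dotpDr, dotpNr, dotpZl, dotpZr) (dotpC head_ones) dotp_basis_row mxE /= c'_lt_n.
  rewrite dotp_head_ones /beta !n_eq kE /= mulr1; field.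
  by rewrite ?mulN1r ?gamma_neq0 ?gamma_sq_neq1.
- have /anti_leq c_eq : (c <= n <= c)%N by rewrite ord_le_n.
  have /anti_leq c'_eq : (c' <= n <= c')%N by rewrite ord_le_n.
  have -> : c == c' by apply/eqP/val_inj; rewrite /= c_eq c'_eq.
  rewrite dotpZl dotpZr dotp_head_ones n_eq kE /=; field.
  by rewrite ?mulN1r ?gamma_neq0 ?gamma_sq_neq1.
Qed.

End RegularSimplexConstruction.

Lemma regular_simplex_exists (R : realType) d k : (1 < k)%N -> (k <= d.+1)%N ->
  exists w : 'I_k -> 'rV[R]_d, (forall c, on_sphere (w c)) /\ regular_simplex w.
Proof.
move=> k_gt1 k_le_dS.
have k1_gt0 : 0 < k%:R - 1 :> R by rewrite subr_gt0 ltr1n.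
have k_neq0 : k%:R != 0 :> R by rewrite pnatr_eq0 -lt0n ltnW.
have gamma_sq : (Num.sqrt k%:R)^-1 ^+ 2 = k%:R^-1 :> R by rewrite exprVn sqr_sqrtr.
pose scale : R := Num.sqrt (k%:R / (k%:R - 1)).
have scale_sq : scale ^+ 2 = k%:R / (k%:R - 1) by rewrite sqr_sqrtr // divr_ge0 // ltW.
pose w (c : 'I_k) := scale *: simplex_vertex d (Num.sqrt k%:R)^-1 c.
have dotp_w c c' : dotp (w c) (w c') = k%:R / (k%:R - 1) * ((c == c')%:R - k%:R^-1).
  by rewrite dotpZl dotpZr mulrA -expr2 scale_sq dotp_simplex_vertex.
exists w; split=> [c | c c' cc']; rewrite /on_sphere dotp_w ?eqxx ?(negbTE cc') /=.
  by field; rewrite k_neq0 gt_eqF.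
by field; rewrite k_neq0 gt_eqF.
Qed.

Theorem theorem4 (R : realType) (d k N : nat) (y : 'I_N -> 'I_k) :
  (2 <= d)%N -> (2 <= k)%N -> (k <= d.+1)%N -> class_balanced y ->
  (* the bound -k/(k-1) is attained (so it is the minimum of R) *)
  (exists (w : 'I_k -> 'rV[R]_d) (z : 'I_N -> 'rV[R]_d),
      (forall c, on_sphere (w c)) /\ (forall i, on_sphere (z i)) /\
      sm_risk y w z = - (k%:R / (k%:R - 1))) /\
  forall (w : 'I_k -> 'rV[R]_d) (z : 'I_N -> 'rV[R]_d),
    (forall c, on_sphere (w c)) -> (forall i, on_sphere (z i)) ->
    [/\ sm_risk y w z >= - (k%:R / (k%:R - 1)),
        (sm_risk y w z = - (k%:R / (k%:R - 1)) <->
          (forall i j : 'I_k, i != j -> dotp (w i) (w j) = - (1 / (k%:R - 1))) /\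
          (forall i, z i = w (y i))),
        (sm_risk y w z = - (k%:R / (k%:R - 1)) ->
          class_margin w = acos (- (1 / (k%:R - 1))) /\
          min_sample_margin y w z = k%:R / (k%:R - 1)),
        class_margin w <= acos (- (1 / (k%:R - 1))) &
        min_sample_margin y w z <= k%:R / (k%:R - 1)].
Proof.
move=> _ k_gt1 k_le_dS [m [m_gt0 class_size]]; split.
  have [w [w_unit simplex]] := regular_simplex_exists R k_gt1 k_le_dS.
  exists w, (w \o y); split=> //; split=> [i|]; first exact: w_unit.
  exact: sm_risk_regular_simplex k_gt1 w_unit m_gt0 class_size simplex (fun=> erefl).
move=> w z w_unit z_unit.
have risk_min_iff : sm_risk y w z = - (k%:R / (k%:R - 1)) <->
    regular_simplex w /\ forall i, z i = w (y i).
  split=> [|[simplex zE]]; first exact: sm_risk_min k_gt1 w_unit z_unit m_gt0 class_size.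
  exact: sm_risk_regular_simplex k_gt1 w_unit m_gt0 class_size simplex zE.
split=> //; first exact: sm_risk_ge k_gt1 w_unit z_unit m_gt0 class_size.
- case/risk_min_iff=> simplex zE; split; first exact: class_margin_regular_simplex.
  exact: min_sample_margin_regular_simplex k_gt1 w_unit m_gt0 class_size simplex zE.
- exact: class_margin_le.
- exact: min_sample_margin_le k_gt1 w_unit z_unit m_gt0 class_size.
Qed.
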